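(* Let $T_1,T_2$ be $2\times2$ matrices with entries in $\{0,1\}$, neither having a zero row, and let $\alpha_i=T_1^{(i)}\otimes T_2^{(i)}$ for $i=1,2$. If $\alpha_1>\alpha_2$ or $\alpha_2>\alpha_1$, then the associated recurrence system is of dominating type.
   Context: $T_k^{(i)}$ is the $i$-th row of $T_k$ and $(v_1,v_2)\otimes(w_1,w_2)=(v_1w_1,v_1w_2,v_2w_1,v_2w_2)$. For vectors, $v\ge w$ means $v_i\ge w_i$ for every coordinate, and $v>w$ means $v\ge w$ and $v\ne w$. The recurrence system: $\gamma^{[s_j]}_{i,0}=1$ and for $n\ge1$ $$\gamma^{[s_1]}_{i,n}=\sum_{j,k=1}^2T_1(i,j)T_2(i,k)\,\gamma^{[s_1]}_{j,n-1}\gamma^{[s_2]}_{k,n-1},\qquad \gamma^{[s_2]}_{i,n}=\sum_{j=1}^2T_1(i,j)\,\gamma^{[s_1]}_{j,n-1}.$$ The items of $\gamma^{[s_1]}_{i,n}$ are the products $\gamma^{[s_1]}_{j,n-1}\gamma^{[s_2]}_{k,n-1}$ indexed by the pairs $(j,k)$ with $T_1(i,j)T_2(i,k)=1$; the items of $\gamma^{[s_2]}_{i,n}$ are the terms $\gamma^{[s_1]}_{j,n-1}$ indexed by the $j$ with $T_1(i,j)=1$. Thus $\gamma^{[s_j]}_{i,n}=\sum_{l}f^{ij}_{l,n-1}$ where $f^{ij}_{l,n-1}$ is the $l$-th item. $\gamma^{[s_j]}_{i,n}$ has a dominate item if there is an index $r$ such that $f^{ij}_{r,n}\ge f^{ij}_{l,n}$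 for every index $l\ne r$ and every $n\ge1$. The system is of dominating type if each of $\gamma^{[s_1]}_{1,n},\gamma^{[s_1]}_{2,n},\gamma^{[s_2]}_{1,n},\gamma^{[s_2]}_{2,n}$ has a dominate item. *)

From mathcomp Require Import all_boot all_order all_algebra.
Set Implicit Arguments. Unset Strict Implicit. Unset Printing Implicit Defensive.

(* The recurrence system: gamma T1 T2 n = (gamma^{[s1]}_{.,n}, gamma^{[s2]}_{.,n}) *)
Fixpoint gamma (T1 T2 : 'M[nat]_2) (n : nat) : ('I_2 -> nat) * ('I_2 -> nat) :=
  match n with
  | 0 => (fun _ => 1, fun _ => 1)
  | n'.+1 =>
      let g := gamma T1 T2 n' in
      (fun i => \sum_(j < 2) \sum_(k < 2) T1 i j * T2 i k * (g.1 j * g.2 k),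
       fun i => \sum_(j < 2) T1 i j * g.1 j)
  end.

Definition gamma1 T1 T2 (i : 'I_2) n := (gamma T1 T2 n).1 i.
Definition gamma2 T1 T2 (i : 'I_2) n := (gamma T1 T2 n).2 i.

(* Kronecker product of row vectors (v1,v2) (x) (w1,w2) = (v1w1,v1w2,v2w1,v2w2) *)
Definition kron2 (v w : 'rV[nat]_2) : 'rV[nat]_4 :=
  \row_(k < 4) (v ord0 (inord (k %/ 2)) * w ord0 (inord (k %% 2)))%N.

Definition alpha (T1 T2 : 'M[nat]_2) (i : 'I_2) : 'rV[nat]_4 :=
  kron2 (row i T1) (row i T2).

Definition vge (v w : 'rV[nat]_4) : Prop := forall k, w ord0 k <= v ord0 k.
Definition vgt (v w : 'rV[nat]_4) : Prop := vge v w /\ v != w.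

(* items of gamma^{[s1]}_{i,n+1}: indexed by (j,k) with T1(i,j) T2(i,k) = 1,
   value gamma^{[s1]}_{j,n} gamma^{[s2]}_{k,n} *)
Definition has_dominate_item1 (T1 T2 : 'M[nat]_2) (i : 'I_2) : Prop :=
  exists r : 'I_2 * 'I_2, T1 i r.1 * T2 i r.2 = 1 /\
    forall l : 'I_2 * 'I_2, T1 i l.1 * T2 i l.2 = 1 ->
      forall n, gamma1 T1 T2 l.1 n * gamma2 T1 T2 l.2 n
                <= gamma1 T1 T2 r.1 n * gamma2 T1 T2 r.2 n.

(* items of gamma^{[s2]}_{i,n+1}: indexed by j with T1(i,j) = 1,
   value gamma^{[s1]}_{j,n} *)
Definition has_dominate_item2 (T1 T2 : 'M[nat]_2) (i : 'I_2) : Prop :=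
  exists r : 'I_2, T1 i r = 1 /\
    forall l : 'I_2, T1 i l = 1 ->
      forall n, gamma1 T1 T2 l n <= gamma1 T1 T2 r n.

Definition dominating_type (T1 T2 : 'M[nat]_2) : Prop :=
  forall i : 'I_2, has_dominate_item1 T1 T2 i /\ has_dominate_item2 T1 T2 i.

From mathcomp Require Import all_boot all_order all_algebra.

(* The rows being 0/1
   and nonzero, it forces row b of T1 and of T2 to lie below row a.  The
   recurrence is monotone in the rows, so gamma_b <= gamma_a at every step in
   both components.  Hence in row i the item indexed by a (when it exists, and
   by b otherwise) dominates all the others, for all n simultaneously. *)

Lemma ord2_other {a b x : 'I_2} : a != b -> x != a -> x = b.
Proof.
by move: a b x => [[|[|a]] ?] [[|[|b]] ?] [[|[|x]] ?] //= *; apply: val_inj.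
Qed.

Definition kron2_index (j k : 'I_2) : 'I_4 := inord (2 * j + k).

Lemma kron2E (v w : 'rV[nat]_2) (j k : 'I_2) :
  kron2 v w ord0 (kron2_index j k) = v ord0 j * w ord0 k.
Proof.
have jk_lt : 2 * j + k < 4 by case: j k => [[|[|j]] ?] [[|[|k]] ?].
rewrite /kron2 mxE inordK //.
have -> : (2 * j + k) %/ 2 = j by rewrite mulnC divnMDl // divn_small // addn0.
have -> : (2 * j + k) %% 2 = k by rewrite mulnC modnMDl modn_small.
by rewrite !inord_val.
Qed.

Section KronCancel.

Context {v w v' w' : 'rV[nat]_2}.
Hypothesis kron2_ge : vge (kron2 v w) (kron2 v' w').

Lemma kron2_ge_entry (j k : 'I_2) : v' ord0 j * w' ord0 k <= v ord0 j * w ord0 k.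
Proof. by have := kron2_ge (kron2_index j k); rewrite !kron2E. Qed.

Lemma kron2_ge_l {k : 'I_2} :
  (forall k, w ord0 k <= 1) -> w' ord0 k != 0 -> forall j, v' ord0 j <= v ord0 j.
Proof.
move=> w_le1; rewrite -lt0n => w'k_gt0 j.
rewrite (leq_trans (leq_pmulr _ w'k_gt0)) //.
by rewrite (leq_trans (kron2_ge_entry j k)) // -{2}(muln1 (v ord0 j)) leq_mul.
Qed.

Lemma kron2_ge_r {j : 'I_2} :
  (forall j, v ord0 j <= 1) -> v' ord0 j != 0 -> forall k, w' ord0 k <= w ord0 k.
Proof.
move=> v_le1; rewrite -lt0n => v'j_gt0 k.
rewrite (leq_trans (leq_pmull _ v'j_gt0)) //.
by rewrite (leq_trans (kron2_ge_entry j k)) // -{2}(mul1n (w ord0 k)) leq_mul.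
Qed.

End KronCancel.

Lemma gamma_row_le {T1 T2 : 'M[nat]_2} {a b : 'I_2} :
  (forall j, T1 b j <= T1 a j) -> (forall k, T2 b k <= T2 a k) ->
  forall n, gamma1 T1 T2 b n <= gamma1 T1 T2 a n /\
            gamma2 T1 T2 b n <= gamma2 T1 T2 a n.
Proof.
move=> T1_le T2_le [|n] //; rewrite /gamma1 /gamma2 /=; split.
- by apply: leq_sum => j _; apply: leq_sum => k _; rewrite !leq_mul.
- by apply: leq_sum => j _; rewrite leq_mul.
Qed.

Definition lead_col (T : 'M[nat]_2) (a b i : 'I_2) : 'I_2 :=
  if T i a == 1 then a else b.

Section LeadingColumn.

Context {T : 'M[nat]_2} {a b : 'I_2}.
Hypotheses (neq_ab : a != b) (T_le1 : forall i j, T i j <= 1)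
  (T_row_neq0 : forall i, exists j, T i j != 0).

Lemma lead_col_eq1 i : T i (lead_col T a b i) = 1.
Proof.
rewrite /lead_col; case: eqP => // Tia_neq1.
have [j Tij_neq0] := T_row_neq0 i.
have Tij_eq1 : T i j = 1 by have := T_le1 i j; case: (T i j) Tij_neq0 => [|[]].
have j_neq_a : j != a by apply: contra_not_neq Tia_neq1 => <-.
by rewrite -(ord2_other neq_ab j_neq_a).
Qed.

Lemma le_lead_col (f : 'I_2 -> nat) i l :
  f b <= f a -> T i l = 1 -> f l <= f (lead_col T a b i).
Proof.
move=> fb_le Til_eq1; rewrite /lead_col; case: eqP => [_|Tia_neq1].
- by case: (l =P a) => [->|/eqP /(ord2_other neq_ab) ->].
- have l_neq_a : l != a by apply: contra_not_neq Tia_neq1 => <-.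
  by rewrite (ord2_other neq_ab l_neq_a).
Qed.

End LeadingColumn.

Lemma dominating_type_of_row_le {T1 T2 : 'M[nat]_2} {a b : 'I_2} :
  (forall i j, T1 i j <= 1) -> (forall i j, T2 i j <= 1) ->
  (forall i, exists j, T1 i j != 0) -> (forall i, exists j, T2 i j != 0) ->
  a != b -> (forall j, T1 b j <= T1 a j) -> (forall k, T2 b k <= T2 a k) ->
  dominating_type T1 T2.
Proof.
move=> T1_le1 T2_le1 T1_row T2_row neq_ab T1_le T2_le i.
have gamma_le := gamma_row_le T1_le T2_le.
have T1_lead := lead_col_eq1 neq_ab T1_le1 T1_row i.
have T2_lead := lead_col_eq1 neq_ab T2_le1 T2_row i.
split.
- exists (lead_col T1 a b i, lead_col T2 a b i); split; first by rewrite T1_lead T2_lead.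
  move=> [l1 l2] /= /eqP; rewrite muln_eq1 => /andP[/eqP T1l1 /eqP T2l2] n.
  by rewrite leq_mul // le_lead_col //; case: (gamma_le n).
- exists (lead_col T1 a b i); split=> // l T1l n.
  by rewrite le_lead_col //; case: (gamma_le n).
Qed.

Lemma rows_le_of_alpha_ge {T1 T2 : 'M[nat]_2} {a b : 'I_2} :
  (forall j, T1 a j <= 1) -> (forall k, T2 a k <= 1) ->
  (exists j, T1 b j != 0) -> (exists k, T2 b k != 0) ->
  vge (alpha T1 T2 a) (alpha T1 T2 b) ->
  (forall j, T1 b j <= T1 a j) /\ (forall k, T2 b k <= T2 a k).
Proof.
move=> T1a_le1 T2a_le1 [j T1bj] [k T2bk] alpha_ge; split=> [j'|k'].
- have T2a_le1' c : row a T2 ord0 c <= 1 by rewrite mxE.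
  have T2bk' : row b T2 ord0 k != 0 by rewrite mxE.
  by have := kron2_ge_l alpha_ge T2a_le1' T2bk' j'; rewrite !mxE.
- have T1a_le1' c : row a T1 ord0 c <= 1 by rewrite mxE.
  have T1bj' : row b T1 ord0 j != 0 by rewrite mxE.
  by have := kron2_ge_r alpha_ge T1a_le1' T1bj' k'; rewrite !mxE.
Qed.

Theorem proposition2 (T1 T2 : 'M[nat]_2)
  (H01 : forall i j, T1 i j <= 1) (H02 : forall i j, T2 i j <= 1)
  (Hr1 : forall i, exists j, T1 i j != 0) (Hr2 : forall i, exists j, T2 i j != 0) :
  vgt (alpha T1 T2 ord0) (alpha T1 T2 ord_max) \/ vgt (alpha T1 T2 ord_max) (alpha T1 T2 ord0) ->
  dominating_type T1 T2.
Proof.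
case=> [[alpha_ge _]|[alpha_ge _]];
  have [T1_le T2_le] := rows_le_of_alpha_ge (H01 _) (H02 _) (Hr1 _) (Hr2 _) alpha_ge;
  exact: dominating_type_of_row_le H01 H02 Hr1 Hr2 _ T1_le T2_le.
Qed.
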